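(* Let $n$ and $b$ be odd positive integers with $n\nmid b$, let $m$ be an even positive integer, and let $q=\gcd(n,b)$. Then $b+m$ and $b-m$ do not both lie in the interval $(n-q,n+q)$ modulo $2n$.
   Context: An integer $x$ lies in the interval $(n-q,n+q)$ modulo $2n$ if some integer congruent to $x$ modulo $2n$ lies in that open real interval. *)

From Stdlib Require Import ZArith.
Open Scope Z_scope.

Definition in_interval_mod (n q x : Z) : Prop :=
  exists y : Z, (2 * n | y - x) /\ n - q < y /\ y < n + q.

(* If y, y' are the representatives of b + m and b - m in (n - q, n + q), then
   y + y' - 2n is a multiple of 2q (as q divides n and b) lying strictly between
   -2q and 2q, hence 0.  So 2b = (b + m) + (b - m) is congruent to y + y' = 2n
   modulo 2n, i.e. n divides b. *)
From Stdlib Require Import ZArith Znumtheory Lia.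
Open Scope Z_scope.

Lemma divide_abs_lt_eq0 (d a : Z) : (d | a) -> Z.abs a < Z.abs d -> a = 0.
Proof.
  intros Hda Hlt.
  destruct (Z.eq_dec a 0) as [-> | Ha0]; [reflexivity |].
  pose proof (Zdivide_bounds d a Hda Ha0); lia.
Qed.

Lemma in_interval_mod_sum (n q x x' : Z) :
  (q | n) -> (2 * q | x + x') ->
  in_interval_mod n q x -> in_interval_mod n q x' -> (2 * n | x + x').
Proof.
  intros Hqn Hqx [y [Hy [Hy_lo Hy_hi]]] [y' [Hy' [Hy'_lo Hy'_hi]]].
  assert (H2q2n : (2 * q | 2 * n)) by now apply Z.mul_divide_mono_l.
  assert (Hsum : y + y' = 2 * n).
  { enough (y + y' - 2 * n = 0) by lia.
    apply (divide_abs_lt_eq0 (2 * q)); [| lia].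
    replace (y + y' - 2 * n)
      with ((y - x) + (y' - x') + (x + x') - 2 * n) by ring.
    apply Z.divide_sub_r; [| exact H2q2n].
    apply Z.divide_add_r; [apply Z.divide_add_r |]; try exact Hqx;
      eapply Z.divide_trans; eassumption. }
  replace (x + x') with (2 * n - (y - x) - (y' - x')) by lia.
  apply Z.divide_sub_r; [apply Z.divide_sub_r |]; auto using Z.divide_refl.
Qed.

Theorem lemma12 (n b m : Z) :
  0 < n -> Z.Odd n -> 0 < b -> Z.Odd b -> ~ (n | b) ->
  0 < m -> Z.Even m ->
  ~ (in_interval_mod n (Z.gcd n b) (b + m) /\
     in_interval_mod n (Z.gcd n b) (b - m)).
Proof.
  intros _ _ _ _ Hnb _ _ [Hplus Hminus].
  apply Hnb, (Z.mul_divide_cancel_l _ _ 2); [lia |].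
  replace (2 * b) with ((b + m) + (b - m)) by ring.
  apply (in_interval_mod_sum n (Z.gcd n b)); auto using Z.gcd_divide_l.
  replace ((b + m) + (b - m)) with (2 * b) by ring.
  apply Z.mul_divide_mono_l, Z.gcd_divide_r.
Qed.
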